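(* Let $X=[0,1]$ with the usual metric, $U=\{0,1,2\}$, and let $F_0,F_1,F_2:[0,1]\to[0,1]$ be given by $F_0(x)=x$ for $0\le x<\frac38$, $F_0(x)=5(x-\frac12)+1$ for $\frac38\le x<\frac12$, $F_0(x)=1$ for $\frac12\le x<\frac58$, $F_0(x)=-5(x-\frac34)+\frac38$ for $\frac58\le x<\frac34$, $F_0(x)=\frac38$ for $\frac34\le x\le1$; $F_1(x)=1$ for $0\le x<\frac14$, $F_1(x)=-4(x-\frac14)+1$ for $\frac14\le x<\frac38$, $F_1(x)=\frac12$ for $\frac38\le x<\frac12$, $F_1(x)=4(x-\frac58)+1$ for $\frac12\le x<\frac58$, $F_1(x)=1$ for $\frac58\le x\le1$; and $F_2(x)=1$ for all $x\in[0,1]$. Consider the control system $x_{n+1}=F_{u_n}(x_n)$ and let $Q=[\frac14,\frac12]$. Then $Q$ is equi-invariant in the mean but not equi-invariant.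
   Context: For $\omega=(\omega_0,\omega_1,\dots)\in\mathscr U=U^{\mathbb N_0}$ and $x\in X$: $\phi(0,x,\omega)=x$, $\phi(k,x,\omega)=F_{\omega_{k-1}}\circ\cdots\circ F_{\omega_0}(x)$. $d(y,Q)=\inf_{q\in Q}|y-q|$, $B_\varepsilon(Q)=\{y:d(y,Q)<\varepsilon\}$, $B(x,\delta)$ open ball, $\mathbb N=\{1,2,\dots\}$. A point $x\in Q$ is an equi-invariant point of $Q$ if for every $\varepsilon>0$ there exist $\delta>0$ and $\omega\in\mathscr U$ such that $\phi(k,y,\omega)\in B_\varepsilon(Q)$ for all $k\in\mathbb N_0$ and all $y\in B(x,\delta)\cap Q$. It is an equi-invariant point in the mean of $Q$ if for every $\varepsilon>0$ there exist $\delta>0$ and $\omega\in\mathscr U$ such that $\frac1n\sum_{i=0}^{n-1}d(\phi(i,y,\omega),Q)<\varepsilon$ for all $n\in\mathbb N$ and all $y\in B(x,\delta)\cap Q$. $Q$ is equi-invariant (resp. equi-invariant in the mean) if all its points are. *)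

From Stdlib Require Import Reals Lra.
From Coquelicot Require Import Coquelicot.
Open Scope R_scope.

Fixpoint phi {U : Type} (F : U -> R -> R) (k : nat) (x : R) (w : nat -> U) : R :=
  match k with
  | O => x
  | S k' => F (w k') (phi F k' x w)
  end.

(* d(y,Q) = inf_{q in Q} |y - q|  (Q nonempty in all uses) *)
Definition dist_set (y : R) (Q : R -> Prop) : R :=
  real (Glb_Rbar (fun r => exists q, Q q /\ r = Rabs (y - q))).

Definition Beps (eps : R) (Q : R -> Prop) (y : R) : Prop := dist_set y Q < eps.

Definition equi_invariant_point {U : Type} (F : U -> R -> R) (Q : R -> Prop) (x : R) : Prop :=
  Q x /\
  forall eps, 0 < eps -> exists delta, 0 < delta /\ exists w : nat -> U,
    forall k y, Rabs (y - x) < delta -> Q y -> Beps eps Q (phi F k y w).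

Definition equi_invariant_mean_point {U : Type} (F : U -> R -> R) (Q : R -> Prop) (x : R) : Prop :=
  Q x /\
  forall eps, 0 < eps -> exists delta, 0 < delta /\ exists w : nat -> U,
    forall (n : nat) y, (1 <= n)%nat -> Rabs (y - x) < delta -> Q y ->
      / INR n * sum_f_R0 (fun i => dist_set (phi F i y w) Q) (pred n) < eps.

Definition equi_invariant {U : Type} (F : U -> R -> R) (Q : R -> Prop) : Prop :=
  forall x, Q x -> equi_invariant_point F Q x.

Definition equi_invariant_mean {U : Type} (F : U -> R -> R) (Q : R -> Prop) : Prop :=
  forall x, Q x -> equi_invariant_mean_point F Q x.

Inductive ctrl : Type := c0 | c1 | c2.

Definition F0 (x : R) : R :=
  if Rlt_dec x (3/8) then x
  else if Rlt_dec x (1/2) then 5 * (x - 1/2) + 1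
  else if Rlt_dec x (5/8) then 1
  else if Rlt_dec x (3/4) then -5 * (x - 3/4) + 3/8
  else 3/8.

Definition F1 (x : R) : R :=
  if Rlt_dec x (1/4) then 1
  else if Rlt_dec x (3/8) then -4 * (x - 1/4) + 1
  else if Rlt_dec x (1/2) then 1/2
  else if Rlt_dec x (5/8) then 4 * (x - 5/8) + 1
  else 1.

Definition F2 (x : R) : R := 1.

Definition Fex (u : ctrl) : R -> R :=
  match u with c0 => F0 | c1 => F1 | c2 => F2 end.

Definition Qex (y : R) : Prop := 1/4 <= y <= 1/2.

From Pilot Require Import Defs.
From Stdlib Require Import Reals Lra Lia Classical ConstructiveEpsilon.
From Coquelicot Require Import Coquelicot.
Open Scope R_scope.

(** The point 3/8 is a repelling fixed point of F0 inside Q.  Points just to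
    its right are pushed out of Q by F0 (expansion by 5), and points just to
    its left are sent just above 1/2 by F1 and to 1 by F2; from just above
    1/2 every control pushes the orbit beyond 5/8, at distance 1/8 from Q.
    So no single control sequence keeps a whole neighbourhood of 3/8 close
    to Q: Q is not equi-invariant at 3/8.  In the mean, however, one may
    leave Q once: apply F0 for L steps (neighbours of 3/8 stay in Q), jump
    to 1 with F2, then F0 sends 1 to the fixed point 3/8 forever; the single
    excursion of size 1/2 has Cesaro weight at most 1/(2(L+1)).  Right of
    3/8, the constant control 1 maps Q ∩ [3/8,1/2] to 1/2 and never leaves Q. *)

Lemma dist_set_spec (Q : R -> Prop) (z q : R) : Q q ->
  (forall q', Q q' -> dist_set z Q <= Rabs (z - q')) /\
  (forall r, (forall q', Q q' -> r <= Rabs (z - q')) -> r <= dist_set z Q).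
Proof.
  intros Hq. unfold dist_set.
  set (E := fun r => exists q0, Q q0 /\ r = Rabs (z - q0)).
  destruct (Glb_Rbar_correct E) as [Hlb Hglb].
  assert (Hup : Rbar_le (Glb_Rbar E) (Rabs (z - q))) by (apply Hlb; exists q; auto).
  assert (Hlow : Rbar_le 0 (Glb_Rbar E))
    by (apply Hglb; intros r [q0 [_ ->]]; apply Rabs_pos).
  destruct (Glb_Rbar E) as [g| |]; simpl in Hup, Hlow; try contradiction.
  split.
  - intros q' Hq'. exact (Hlb _ (ex_intro _ q' (conj Hq' eq_refl))).
  - intros r Hr. apply (Hglb r). intros s [q0 [Hq0 ->]]. exact (Hr q0 Hq0).
Qed.

Lemma dist_set_le (Q : R -> Prop) (z q : R) : Q q -> dist_set z Q <= Rabs (z - q).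
Proof. intros Hq. exact (proj1 (dist_set_spec Q z q Hq) q Hq). Qed.

Lemma dist_set_of_mem (Q : R -> Prop) (z : R) : Q z -> dist_set z Q <= 0.
Proof.
  intros Hz. pose proof (dist_set_le Q z z Hz) as H.
  rewrite Rminus_diag, Rabs_R0 in H. exact H.
Qed.

Section Trajectories.
Variables (U : Type) (F : U -> R -> R).

Lemma phi_S (k : nat) (y : R) (w : nat -> U) :
  phi F (S k) y w = F (w k) (phi F k y w).
Proof. reflexivity. Qed.

Lemma phi_preserves (P : nat -> R -> Prop) (w : nat -> U) (y : R) (k : nat) :
  P O y -> (forall j z, (j < k)%nat -> P j z -> P (S j) (F (w j) z)) ->
  P k (phi F k y w).
Proof.
  intros H0 Hstep. induction k as [|k IH]; [exact H0|].
  rewrite phi_S. apply Hstep; [lia|].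
  apply IH. intros j z Hj. apply Hstep. lia.
Qed.

Lemma not_equi_invariant_point_of_escape (Q : R -> Prop) (x eps : R) :
  0 < eps ->
  (forall delta w, 0 < delta -> exists y k,
     Rabs (y - x) < delta /\ Q y /\ eps <= dist_set (phi F k y w) Q) ->
  ~ equi_invariant_point F Q x.
Proof.
  intros Heps Hesc [_ Hx].
  destruct (Hx eps Heps) as [delta [Hdelta [w Hw]]].
  destruct (Hesc delta w Hdelta) as [y [k [Hy [HQy Hfar]]]].
  specialize (Hw k y Hy HQy). unfold Beps in Hw. lra.
Qed.

End Trajectories.

Lemma partial_sum_single_defect (d : nat -> R) (K : nat) (c : R) :
  (forall i, i <> K -> d i <= 0) -> d K <= c -> 0 <= c ->
  forall m, sum_f_R0 d m <= if Nat.leb K m then c else 0.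
Proof.
  intros Hd HK Hc. induction m as [|m IH]; simpl sum_f_R0.
  - destruct (Nat.eq_dec 0 K) as [<-|Hne]; [simpl; lra|].
    pose proof (Hd O Hne). destruct (Nat.leb_spec K 0); [lia|lra].
  - assert (Hlast : d (S m) <= if Nat.eqb (S m) K then c else 0).
    { destruct (Nat.eqb_spec (S m) K) as [->|Hne]; [exact HK|exact (Hd _ Hne)]. }
    destruct (Nat.leb_spec K m), (Nat.leb_spec K (S m)), (Nat.eqb_spec (S m) K);
      try lia; lra.
Qed.

Lemma cesaro_single_defect (d : nat -> R) (K : nat) (c : R) (n : nat) :
  (forall i, i <> K -> d i <= 0) -> d K <= c -> 0 <= c -> (1 <= n)%nat ->
  / INR n * sum_f_R0 d (pred n) <= c / INR (S K).
Proof.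
  intros Hd HK Hc Hn.
  pose proof (partial_sum_single_defect d K c Hd HK Hc (pred n)) as Hsum.
  assert (Hinv : 0 < / INR n) by (apply Rinv_0_lt_compat, lt_0_INR; lia).
  assert (HSK : 0 <= c / INR (S K))
    by (apply Rmult_le_pos; [lra | left; apply Rinv_0_lt_compat, lt_0_INR; lia]).
  destruct (Nat.leb_spec K (pred n)).
  - assert (Hle : / INR n <= / INR (S K))
      by (apply Rinv_le_contravar; [apply lt_0_INR; lia | apply le_INR; lia]).
    unfold Rdiv. rewrite (Rmult_comm c).
    apply Rle_trans with (/ INR n * c); [apply Rmult_le_compat_l; lra|].
    apply Rmult_le_compat_r; lra.
  - apply Rle_trans with 0; [|exact HSK].
    rewrite <- (Rmult_0_r (/ INR n)). apply Rmult_le_compat_l; lra.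
Qed.

Lemma eventually_small_ratio (c eps : R) : 0 <= c -> 0 < eps ->
  exists N, forall K, (N <= K)%nat -> c / INR (S K) < eps.
Proof.
  intros Hc Heps.
  destruct (archimed_cor1 (eps / (c + 1))) as [N [HN HN0]].
  { apply Rdiv_lt_0_compat; lra. }
  exists N. intros K HK.
  assert (HNpos : 0 < / INR N) by (apply Rinv_0_lt_compat, lt_0_INR; lia).
  assert (Hle : / INR (S K) <= / INR N)
    by (apply Rinv_le_contravar; [apply lt_0_INR; lia | apply le_INR; lia]).
  assert (Hscaled : (c + 1) * / INR N < eps).
  { apply Rmult_lt_compat_l with (r := c + 1) in HN; [|lra].
    unfold Rdiv in HN. rewrite (Rmult_comm eps), <- Rmult_assoc, Rinv_r,
      Rmult_1_l in HN by lra. exact HN. }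
  unfold Rdiv. apply Rle_lt_trans with ((c + 1) * / INR N); [|exact Hscaled].
  apply Rmult_le_compat; try lra. left; apply Rinv_0_lt_compat, lt_0_INR; lia.
Qed.

Lemma equi_invariant_mean_point_of_single_exit (U : Type) (F : U -> R -> R)
  (Q : R -> Prop) (x c : R) :
  Q x -> 0 <= c ->
  (forall N, exists K, (N <= K)%nat /\ exists delta, 0 < delta /\ exists w,
     forall y, Rabs (y - x) < delta -> Q y ->
       (forall i, i <> K -> Q (phi F i y w)) /\ dist_set (phi F K y w) Q <= c) ->
  equi_invariant_mean_point F Q x.
Proof.
  intros HQx Hc Hexit. split; [exact HQx|]. intros eps Heps.
  destruct (eventually_small_ratio c eps Hc Heps) as [N HN].
  destruct (Hexit N) as [K [HNK [delta [Hdelta [w Hw]]]]].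
  exists delta. split; [exact Hdelta|]. exists w. intros n y Hn Hy HQy.
  destruct (Hw y Hy HQy) as [Hin Hout].
  apply Rle_lt_trans with (c / INR (S K)); [|exact (HN K HNK)].
  apply cesaro_single_defect; auto.
  intros i Hi. apply dist_set_of_mem, Hin, Hi.
Qed.

Lemma escape_of_expansion (s : nat -> R) (a b lam : R) :
  1 < lam -> a < s O ->
  (forall k, a < s k < b -> lam * (s k - a) <= s (S k) - a) ->
  exists k, b <= s k.
Proof.
  intros Hlam H0 Hstep.
  destruct (classic (exists k, b <= s k)) as [Hreach|Hnone]; [exact Hreach|exfalso].
  assert (Hbelow : forall k, s k < b)
    by (intros k; apply Rnot_le_lt; intros Hk; apply Hnone; exists k; exact Hk).
  assert (Hgrow : forall k, lam ^ k * (s O - a) <= s k - a).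
  { induction k as [|k IH]; [simpl; lra|].
    assert (Hpos : 0 < lam ^ k * (s O - a))
      by (apply Rmult_lt_0_compat; [apply pow_lt|]; lra).
    specialize (Hstep k ltac:(split; [lra | apply Hbelow])).
    simpl. rewrite Rmult_assoc.
    apply Rle_trans with (lam * (s k - a)); [|exact Hstep].
    apply Rmult_le_compat_l; lra. }
  destruct (Pow_x_infinity lam ltac:(rewrite Rabs_right; lra) ((b - a) / (s O - a)))
    as [N HN].
  specialize (HN N (le_n N)).
  rewrite Rabs_right in HN by (left; apply pow_lt; lra).
  assert (Hbig : b - a <= lam ^ N * (s O - a)).
  { apply Rmult_ge_compat_r with (r := s O - a) in HN; [|lra].
    unfold Rdiv in HN. rewrite Rmult_assoc, Rinv_l, Rmult_1_r in HN by lra. lra. }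
  specialize (Hgrow N). specialize (Hbelow N). lra.
Qed.

Ltac solve_F := cbn [Fex]; unfold F0, F1, F2; repeat destruct Rlt_dec; lra.

(** The window of points that F0 keeps in Q for n more steps. *)
Definition window (n : nat) (x : R) : Prop := 1/4 <= x < 3/8 + /8 * (/5) ^ n.

Lemma fifth_pow_bounds (n : nat) : 0 < (/5) ^ n <= 1.
Proof.
  split; [apply pow_lt; lra|].
  rewrite <- (pow1 n). apply pow_incr. lra.
Qed.

Lemma window_in_Q (n : nat) (x : R) : window n x -> Qex x.
Proof. unfold window, Qex. pose proof (fifth_pow_bounds n). lra. Qed.

Lemma F0_fixes (x : R) : x <= 3/8 -> F0 x = x.
Proof. intros Hx. solve_F. Qed.

Lemma F0_window (n : nat) (x : R) : window (S n) x -> window n (F0 x).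
Proof.
  unfold window. simpl pow. pose proof (fifth_pow_bounds n).
  set (p := (/5) ^ n) in *. intros Hx. solve_F.
Qed.

Lemma F0_one : F0 1 = 3/8.
Proof. solve_F. Qed.

Lemma F1_on_right (x : R) : 3/8 <= x <= 1/2 -> F1 x = 1/2.
Proof. intros Hx. solve_F. Qed.

Lemma nonzero_control_left (u : ctrl) (x : R) :
  u <> c0 -> 1/4 <= x < 3/8 -> 1/2 < Fex u x.
Proof. intros Hu Hx. destruct u; [congruence| |]; solve_F. Qed.

Lemma escape_above_half (w : nat -> ctrl) (y : R) (m : nat) :
  1/2 < phi Fex m y w -> exists k, 5/8 <= phi Fex k y w.
Proof.
  intros Hm.
  destruct (escape_of_expansion (fun k => phi Fex (m + k) y w) (1/2) (5/8) 2)
    as [k Hk].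
  - lra.
  - rewrite Nat.add_0_r. exact Hm.
  - intros k Hk. cbv beta in *. rewrite Nat.add_succ_r, phi_S.
    destruct (w (m + k)%nat); solve_F.
  - exists (m + k)%nat. exact Hk.
Qed.

Lemma escape_right_of_fixed_point (w : nat -> ctrl) (y : R) :
  (forall j, w j = c0) -> 3/8 < y -> exists k, 5/8 <= phi Fex k y w.
Proof.
  intros Hw Hy.
  apply (escape_of_expansion (fun k => phi Fex k y w) (3/8) (5/8) 2); [lra|exact Hy|].
  intros k Hk. cbv beta in *. rewrite phi_S, Hw. solve_F.
Qed.

Lemma escape_near_fixed_point (delta : R) (w : nat -> ctrl) : 0 < delta ->
  exists y k, Rabs (y - 3/8) < delta /\ Qex y /\ 5/8 <= phi Fex k y w.
Proof.
  intros Hdelta.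
  set (t := Rmin (delta / 2) (1/16)).
  assert (Ht : 0 < t < delta /\ t <= 1/16).
  { unfold t. pose proof (Rmin_l (delta / 2) (1/16)).
    pose proof (Rmin_r (delta / 2) (1/16)).
    assert (0 < Rmin (delta / 2) (1/16)) by (apply Rmin_pos; lra). lra. }
  destruct (classic (exists m, w m <> c0)) as [Hsome|Hnone].
  - assert (Hdec : forall m, {w m <> c0} + {~ w m <> c0})
      by (intros m; destruct (w m); [right; tauto | left; discriminate | left; discriminate]).
    destruct (epsilon_smallest _ Hdec Hsome) as [m [Hm Hfirst]].
    assert (Hprefix : phi Fex m (3/8 - t) w = 3/8 - t).
    { apply (phi_preserves _ Fex (fun _ z => z = 3/8 - t)); [reflexivity|].
      intros j z Hj ->.
      assert (Hwj : w j = c0)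
        by (apply NNPP; intros Hne; specialize (Hfirst j Hne); lia).
      rewrite Hwj. apply F0_fixes. lra. }
    destruct (escape_above_half w (3/8 - t) (S m)) as [k Hk].
    { rewrite phi_S, Hprefix. apply nonzero_control_left; [exact Hm | lra]. }
    exists (3/8 - t), k. rewrite Rabs_left by lra. unfold Qex. lra.
  - assert (Hw : forall j, w j = c0)
      by (intros j; apply NNPP; intros Hne; apply Hnone; exists j; exact Hne).
    destruct (escape_right_of_fixed_point w (3/8 + t) Hw) as [k Hk]; [lra|].
    exists (3/8 + t), k. rewrite Rabs_right by lra. unfold Qex. lra.
Qed.

Lemma dist_Q_far (z : R) : 5/8 <= z -> 1/8 <= dist_set z Qex.
Proof.
  intros Hz. apply (proj2 (dist_set_spec Qex z (1/2) ltac:(unfold Qex; lra))).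
  intros q Hq. unfold Qex in Hq. rewrite Rabs_right; lra.
Qed.

Lemma not_equi_invariant : ~ equi_invariant Fex Qex.
Proof.
  intros H.
  apply (not_equi_invariant_point_of_escape _ Fex Qex (3/8) (1/8));
    [lra | | apply H; unfold Qex; lra].
  intros delta w Hdelta.
  destruct (escape_near_fixed_point delta w Hdelta) as [y [k [Hy [HQy Hk]]]].
  exists y, k. split; [exact Hy|]. split; [exact HQy|]. apply dist_Q_far, Hk.
Qed.

Definition exit_control (L j : nat) : ctrl := if Nat.eqb j L then c2 else c0.

Lemma exit_control_other (L j : nat) : j <> L -> exit_control L j = c0.
Proof. intros Hj. unfold exit_control. destruct (Nat.eqb_spec j L); congruence. Qed.

Lemma exit_trajectory_prefix (L j : nat) (y : R) :
  window L y -> (j <= L)%nat -> window (L - j) (phi Fex j y (exit_control L)).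
Proof.
  intros Hy Hj.
  apply (phi_preserves _ Fex (fun j z => window (L - j) z)).
  - rewrite Nat.sub_0_r. exact Hy.
  - intros j' z Hj' Hz. rewrite exit_control_other by lia. apply F0_window.
    replace (S (L - S j')) with (L - j')%nat by lia. exact Hz.
Qed.

Lemma exit_trajectory_exit (L : nat) (y : R) : phi Fex (S L) y (exit_control L) = 1.
Proof. rewrite phi_S. unfold exit_control. rewrite Nat.eqb_refl. reflexivity. Qed.

Lemma exit_trajectory_tail (L i : nat) (y : R) :
  phi Fex (S (S L) + i) y (exit_control L) = 3/8.
Proof.
  induction i as [|i IH].
  - rewrite Nat.add_0_r, phi_S, exit_trajectory_exit, exit_control_other by lia.
    exact F0_one.
  - rewrite Nat.add_succ_r, phi_S, IH, exit_control_other by lia.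
    apply F0_fixes. lra.
Qed.

Lemma exit_trajectory_in_Q (L i : nat) (y : R) :
  window L y -> i <> S L -> Qex (phi Fex i y (exit_control L)).
Proof.
  intros Hy Hi. destruct (Nat.le_gt_cases i L) as [HiL|HiL].
  - exact (window_in_Q _ _ (exit_trajectory_prefix L i y Hy HiL)).
  - replace i with (S (S L) + (i - S (S L)))%nat by lia.
    rewrite exit_trajectory_tail. unfold Qex. lra.
Qed.

Lemma mean_left (x : R) : Qex x -> x <= 3/8 -> equi_invariant_mean_point Fex Qex x.
Proof.
  intros HQx Hx.
  apply (equi_invariant_mean_point_of_single_exit _ Fex Qex x (1/2)); [exact HQx | lra |].
  intros N. exists (S N). split; [lia|].
  exists (/8 * (/5) ^ N). split; [pose proof (fifth_pow_bounds N); lra|].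
  exists (exit_control N). intros y Hy HQy.
  assert (Hwin : window N y)
    by (apply Rabs_def2 in Hy; unfold window; unfold Qex in HQy; lra).
  split.
  - intros i Hi. exact (exit_trajectory_in_Q N i y Hwin Hi).
  - rewrite exit_trajectory_exit.
    apply Rle_trans with (Rabs (1 - 1/2)); [apply dist_set_le; unfold Qex; lra|].
    rewrite Rabs_right; lra.
Qed.

Lemma mean_right (x : R) : Qex x -> 3/8 < x -> equi_invariant_mean_point Fex Qex x.
Proof.
  intros HQx Hx.
  apply (equi_invariant_mean_point_of_single_exit _ Fex Qex x (1/2)); [exact HQx | lra |].
  intros N. exists N. split; [lia|].
  exists (x - 3/8). split; [lra|].
  exists (fun _ => Defs.c1). intros y Hy HQy.
  assert (Hstay : forall i, Qex (phi Fex i y (fun _ => Defs.c1))).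
  { intros i. unfold Qex.
    enough (3/8 <= phi Fex i y (fun _ => Defs.c1) <= 1/2) by lra.
    apply (phi_preserves _ Fex (fun _ z => 3/8 <= z <= 1/2)).
    - apply Rabs_def2 in Hy. unfold Qex in HQy. lra.
    - intros j z _ Hz. simpl Fex. rewrite F1_on_right by exact Hz. lra. }
  split.
  - intros i _. exact (Hstay i).
  - apply Rle_trans with 0; [apply dist_set_of_mem, Hstay | lra].
Qed.

Theorem mainTheorem14 :
  equi_invariant_mean Fex Qex /\ ~ equi_invariant Fex Qex.
Proof.
  split.
  - intros x HQx. destruct (Rle_lt_dec x (3/8)) as [Hx|Hx].
    + exact (mean_left x HQx Hx).
    + exact (mean_right x HQx Hx).
  - exact not_equi_invariant.
Qed.
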